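(* Let $H$ be a simple graph which is neither a matching nor a star, and let $\alpha,\beta>0$. (1) If $\operatorname{ex}(K_n,H)=O(n^\alpha)$ as $n\to\infty$, then $\mathcal{E}_H(k)=\Omega(k^{2/\alpha})$ as $k\to\infty$. (2) If $\operatorname{ex}(K_n,H)=\Omega(n^\beta)$ as $n\to\infty$, then $\mathcal{E}^*_H(k)=O(k^{3-\beta})$ as $k\to\infty$.
   Context: Graphs are 2-uniform without isolated vertices; a matching is $sK_2$ and a star is $K_{1,s}$. Multigraphs may have parallel edges (no loops), with $e(\cdot)$ counting multiplicity. $\operatorname{ex}(G,H)$ is the maximum number of edges of a sub-multigraph of $G$ containing no copy of $H$. $\mathcal{E}_H(k):=\sup\{e(G): G\text{ simple}, \operatorname{ex}(G,H)<k\}$ and $\mathcal{E}^*_H(k):=\sup\{e(G): G\text{ multigraph}, \operatorname{ex}(G,H)<k\}$. *)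

From mathcomp Require Import all_boot.
From Stdlib Require Import Reals.

Set Implicit Arguments.
Unset Strict Implicit.
Unset Printing Implicit Defensive.

(* A multigraph on vertex set 'I_n, given by its multiplicity function.
   Isolated vertices are harmless: they contribute neither edges nor copies. *)
Definition mgraph (n : nat) := 'I_n -> 'I_n -> nat.

Definition is_multigraph (n : nat) (m : mgraph n) : Prop :=
  (forall i j, m i j = m j i) /\ (forall i, m i i = 0%N).

Definition is_simple (n : nat) (m : mgraph n) : Prop :=
  is_multigraph m /\ (forall i j, (m i j <= 1)%N).

Definition edges (n : nat) (m : mgraph n) : nat :=
  \sum_(i < n) \sum_(j < n | (i < j)%N) m i j.

Definition Kn (n : nat) : mgraph n := fun i j => if i == j then 0%N else 1%N.
Arguments Kn : clear implicits.

Definition is_graph (h : nat) (H : rel 'I_h) : Prop :=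
  symmetric H /\ irreflexive H /\ (forall u, exists v, H u v).

Definition is_matching (h : nat) (H : rel 'I_h) : Prop :=
  forall u, #|[pred v | H u v]| = 1%N.

Definition is_star (h : nat) (H : rel 'I_h) : Prop :=
  exists c, forall u v, H u v -> u = c \/ v = c.

Definition contains (n : nat) (m : mgraph n) (h : nat) (H : rel 'I_h) : bool :=
  [exists f : {ffun 'I_h -> 'I_n},
     injectiveb f && [forall u, forall v, H u v ==> (0 < m (f u) (f v))%N]].

Definition ex (n : nat) (m : mgraph n) (h : nat) (H : rel 'I_h) : nat :=
  let b := \max_(i < n) \max_(j < n) m i j in
  \max_(F : {ffun 'I_n * 'I_n -> 'I_b.+1} |
          [forall i, forall j, ((F (i, j) : nat) <= m i j)%N
                               && ((F (i, j) : nat) == F (j, i))]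
          && ~~ contains (fun i j => (F (i, j) : nat)) H)
     edges (fun i j => (F (i, j) : nat)).

From mathcomp Require Import all_boot zify fingroup perm.
From Stdlib Require Import Reals Lra Lia.

Set Implicit Arguments.
Unset Strict Implicit.
Unset Printing Implicit Defensive.

(** Part (1): for [n] about [(k / 2C)^(1/alpha)] we get [ex(K_n,H) <= C n^alpha < k],
    while [K_n] has of the order of [n^2 = k^(2/alpha)] edges.

    Part (2): let [G] be a multigraph with [ex(G,H) < k].  As [H] is not a star, every
    vertex has weighted degree [< k]; as [H] is not a matching, a maximum matching of [G]
    is [H]-free, so its at most [2k] endpoints cover [G] and [e(G) <= 2k^2].  This settles
    [beta <= 1].  If [beta > 1], then [H] is not a star forest, since star forests have
    linear extremal number; a minimal edge cover of [G] is a star forest, hence [H]-free,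
    so [G] has [p < 2k] non-isolated vertices.  Averaging an extremal [H]-free graph on
    these [p] vertices over all relabellings gives a relabelling meeting [G] in at least
    [2 ex(K_p,H) e(G) / (p (p-1))] edges, so [c p^beta e(G) <= p^2 k] and
    [e(G) = O(p^(2-beta) k) = O(k^(3-beta))]. *)

Section Multigraphs.
Variable n : nat.
Implicit Types (m F : mgraph n) (X : {set 'I_n}) (S : {set 'I_n * 'I_n}).

Definition mdeg m (x : 'I_n) := \sum_(j < n) m x j.
Definition deg_sum m := \sum_(i < n) mdeg m i.
Definition support m := [set i | [exists j, 0 < m i j]].
Definition restr m S : mgraph n := fun i j => if (i, j) \in S then m i j else 0.

Lemma deg_sum_edges m : is_multigraph m -> deg_sum m = 2 * edges m.
Proof.
move=> [sym diag]; rewrite /deg_sum /mdeg /edges.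
have split_row i : \sum_(j < n) m i j =
    \sum_(j < n | i < j) m i j + \sum_(j < n | j < i) m i j.
  rewrite (bigID (fun j : 'I_n => i < j)) /=; congr (_ + _).
  rewrite [RHS]big_mkcond [LHS]big_mkcond; apply: eq_bigr => j _ /=.
  case: (ltngtP i j) => //= /val_inj ->; exact: diag.
under eq_bigr => i _ do rewrite split_row.
rewrite big_split /= [X in _ + X](exchange_big_dep xpredT) //=.
rewrite mul2n -addnn; congr (_ + _); apply: eq_bigr => i _.
by apply: eq_bigr => j _; rewrite sym.
Qed.

Lemma eq_edges m F : (forall i j, m i j = F i j) -> edges m = edges F.
Proof. by move=> eq_mF; apply: eq_bigr => i _; apply: eq_bigr => j _. Qed.

Lemma edges_le_cover m X : is_multigraph m ->
  (forall i j, 0 < m i j -> (i \in X) || (j \in X)) ->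
  edges m <= \sum_(x in X) mdeg m x.
Proof.
move=> mm cover; rewrite -(leq_pmul2l (isT : 0 < 2)) -deg_sum_edges //.
have [sym _] := mm.
have weigh_ends i j : m i j <= (i \in X) * m i j + (j \in X) * m j i.
  by rewrite (sym j i); case: (posnP (m i j)) => [-> //|/cover /orP [] ->]; lia.
have -> : \sum_(x in X) mdeg m x = \sum_x (x \in X) * mdeg m x.
  by rewrite big_mkcond; apply: eq_bigr => x _; case: (x \in X); rewrite ?mul1n.
apply: (@leq_trans (\sum_i \sum_j ((i \in X) * m i j + (j \in X) * m j i))).
  by apply: leq_sum => i _; apply: leq_sum => j _.
under eq_bigr => i _ do rewrite big_split /= -big_distrr.
rewrite big_split /= exchange_big /=.
under [X in _ + X]eq_bigr => j _ do rewrite -big_distrr.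
by rewrite addnn -mul2n.
Qed.

Lemma restr_multigraph m S : is_multigraph m ->
  (forall p, p \in S -> (p.2, p.1) \in S) -> is_multigraph (restr m S).
Proof.
move=> [sym diag] S_sym; split=> [i j|i]; rewrite /restr; last by rewrite diag; case: ifP.
case: ifP => [/S_sym /= -> | ijS]; first by rewrite sym.
by case: ifP => // /S_sym /=; rewrite ijS.
Qed.

Lemma restr_le m S i j : restr m S i j <= m i j.
Proof. by rewrite /restr; case: ifP. Qed.

Definition arc_set m S := [forall p in S, (0 < m p.1 p.2) && ((p.2, p.1) \in S)].

Definition out_deg S (u : 'I_n) := #|[set j | (u, j) \in S]|.

Lemma out_deg_other S u v : 1 < out_deg S u -> exists2 c, (u, c) \in S & c != v.
Proof.
move=> /card_gt1P [a [b [aS bS ab]]]; rewrite !inE in aS bS.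
by case: (eqVneq a v) => [av|]; [exists b => //; rewrite -av eq_sym | exists a].
Qed.

Lemma card_le_deg_sum_restr m S :
  (forall p, p \in S -> 0 < m p.1 p.2) -> #|S| <= deg_sum (restr m S).
Proof.
move=> S_pos; rewrite /deg_sum /mdeg pair_big /= -sum1_card big_mkcond /=.
apply: leq_sum => p _; rewrite /restr -surjective_pairing.
by case: ifP => // /S_pos.
Qed.

(* [fst] is injective on [M], so [M] holds both orientations of the edges of a matching. *)
Definition matching_set m M := arc_set m M && (#|fst @: M| == #|M|).

Lemma matching_set_augment m M i j : is_multigraph m -> matching_set m M ->
  0 < m i j -> i \notin fst @: M -> j \notin fst @: M ->
  exists2 M', matching_set m M' & #|M| < #|M'|.
Proof.
move=> [sym diag] /andP [/forall_inP M_arcs /eqP M_card] m_ij iM jM.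
have i_j : i != j by apply: contraTneq m_ij => ->; rewrite diag.
have ijM : (i, j) \notin M by apply: contra iM => ijM; apply/imsetP; exists (i, j).
have jiM : (j, i) \notin M by apply: contra jM => jiM; apply/imsetP; exists (j, i).
have ij_new : (i, j) \notin (j, i) |: M by rewrite !inE xpair_eqE (negbTE i_j) ijM.
have i_new : i \notin j |: fst @: M by rewrite !inE (negbTE i_j) iM.
exists ((i, j) |: ((j, i) |: M)); last by rewrite !cardsU1 ij_new jiM.
apply/andP; split; last by rewrite !imsetU1 !cardsU1 i_new jM ij_new jiM M_card.
apply/forall_inP => p; rewrite !inE => /orP [/eqP -> | /orP [/eqP -> | pM]] /=.
- by rewrite m_ij eqxx orbT.
- by rewrite sym m_ij eqxx.
- by have /andP [-> rev] := M_arcs p pM; rewrite rev !orbT.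
Qed.

Definition edge_cover m E := arc_set m E && (support m \subset fst @: E).

Lemma edge_cover_del m E u v : is_multigraph m -> edge_cover m E -> (u, v) \in E ->
  1 < out_deg E u -> 1 < out_deg E v -> edge_cover m (E :\: [set (u, v); (v, u)]).
Proof.
move=> [_ diag] /andP [/forall_inP E_arcs E_cov] uvE du dv.
have u_v : u != v by apply: contraTneq (E_arcs _ uvE) => /= ->; rewrite diag.
set D := [set (u, v); (v, u)].
have D_sym p : ((p.2, p.1) \in D) = (p \in D).
  by case: p => a b; rewrite !inE !xpair_eqE orbC andbC [(a == v) && _]andbC.
apply/andP; split.
  apply/forall_inP => p; rewrite inE => /andP [pD pE].
  by have /andP [-> rev] := E_arcs p pE; rewrite in_setD (D_sym p) pD rev.
apply/subsetP => i /(subsetP E_cov) /imsetP [[a b] abE ->] /=.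
case: (boolP ((a, b) \in D)) => abD; last by apply/imsetP; exists (a, b); rewrite // inE abD.
have da : 1 < out_deg E a by move: abD; rewrite !inE => /orP [] /eqP [-> _].
have [c acE c_b] := out_deg_other b da.
apply/imsetP; exists (a, c) => //; rewrite inE acE andbT.
move: abD c_b; rewrite !inE !xpair_eqE => /orP [] /andP [/eqP -> /eqP ->] /negbTE c_b.
  by rewrite eqxx c_b (negbTE u_v).
by rewrite eqxx c_b (eq_sym v u) (negbTE u_v).
Qed.

Lemma min_edge_cover_leaf m E u v : is_multigraph m -> edge_cover m E ->
  (forall E', edge_cover m E' -> #|E| <= #|E'|) -> (u, v) \in E ->
  (out_deg E u <= 1) || (out_deg E v <= 1).
Proof.
move=> mm E_cov E_min uvE; apply/negPn/negP; rewrite negb_or -!ltnNge => /andP [du dv].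
have := E_min _ (edge_cover_del mm E_cov uvE du dv); apply/negP; rewrite -ltnNge.
apply: proper_card; apply/properP; split; first exact: subsetDl.
by exists (u, v) => //; rewrite !inE eqxx.
Qed.

End Multigraphs.

Lemma Kn_simple n : is_simple (Kn n).
Proof.
split=> [|i j]; last by rewrite /Kn; case: eqP.
by split=> [i j|i]; rewrite /Kn ?eqxx // eq_sym.
Qed.

Lemma Kn_edges n : 2 * edges (Kn n) = n * (n - 1).
Proof.
rewrite -deg_sum_edges; last by case: (Kn_simple n).
rewrite /deg_sum (eq_bigr (fun _ => n - 1)) ?sum_nat_const ?card_ord // => i _.
rewrite /mdeg (bigD1 i) //= /Kn eqxx add0n.
rewrite (eq_bigr (fun _ => 1)) => [|j /negbTE]; last by rewrite eq_sym => ->.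
by rewrite sum_nat_const muln1 cardC1 card_ord subn1.
Qed.

Lemma sub_Kn_simple n (F : mgraph n) :
  (forall i j, F i j <= Kn n i j) -> (forall i j, F i j = F j i) -> is_simple F.
Proof.
move=> F_Kn F_sym; split=> [|i j].
  by split=> // i; apply/eqP; rewrite -leqn0 (leq_trans (F_Kn i i)) // /Kn eqxx.
by apply: leq_trans (F_Kn i j) _; rewrite /Kn; case: eqP.
Qed.

Lemma mdeg_simple n (F : mgraph n) i :
  (forall j, F i j <= 1) -> mdeg F i <= #|[set j | 0 < F i j]|.
Proof.
move=> F_le1; rewrite /mdeg -sum1_card [X in _ <= X]big_mkcond /=; apply: leq_sum => j _.
by rewrite inE; have := F_le1 j; case: (F i j) => [|[]].
Qed.

Lemma distinct_reps (I : eqType) (T : finType) (x0 : T) (A : I -> {set T})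
    (S : {set T}) (s : seq I) :
  uniq s -> (forall i, i \in s -> #|S| + size s <= #|A i|) ->
  exists g : I -> T, [/\ {in s &, injective g},
    forall i, i \in s -> g i \in A i & forall i, i \in s -> g i \notin S].
Proof.
elim: s S => [|i s IH] S /=; first by exists (fun _ => x0); split.
move=> /andP [i_s s_uniq] A_big.
have [x xA xS] : exists2 x, x \in A i & x \notin S.
  apply/subsetPn; apply: contraTN (A_big i (mem_head _ _)) => /subset_leq_card.
  by move=> AS; rewrite -ltnNge; lia.
have [|g [g_inj gA gS]] := IH (x |: S) s_uniq.
  by move=> j js; rewrite cardsU1 xS add1n addSnnS; apply: A_big; rewrite inE js orbT.
have gx j : j \in s -> g j != x by move/gS; rewrite !inE negb_or => /andP [].
exists (fun j => if j == i then x else g j); split.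
- move=> j k; rewrite !inE.
  case: (eqVneq j i) => [->|j_i]; case: (eqVneq k i) => [->|k_i] //= jin kin.
  + by move=> /esym /eqP; rewrite (negbTE (gx k kin)).
  + by move=> /eqP; rewrite (negbTE (gx j jin)).
  + exact: g_inj.
- move=> j; rewrite inE; case: (eqVneq j i) => [-> //|_ /= js]; exact: gA.
- move=> j; rewrite inE; case: (eqVneq j i) => [-> //|_ /= js].
  by move: (gS j js); rewrite inE negb_or => /andP [].
Qed.

Section Induced.
Variables (p n : nat) (e : 'I_p -> 'I_n).
Hypothesis e_inj : injective e.

Definition induced (m : mgraph n) : mgraph p := fun a b => m (e a) (e b).

Definition pushforward (F : mgraph p) : mgraph n := fun i j =>
  match [pick a | e a == i], [pick b | e b == j] with
  | Some a, Some b => F a b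
  | _, _ => 0
  end.

Lemma pick_preimage a : [pick b | e b == e a] = Some a.
Proof. by case: pickP => [b /eqP /e_inj -> //|/(_ a)]; rewrite eqxx. Qed.

Lemma pushforwardE F a b : pushforward F (e a) (e b) = F a b.
Proof. by rewrite /pushforward !pick_preimage. Qed.

Lemma pushforward_codom F i j : 0 < pushforward F i j -> i \in codom e /\ j \in codom e.
Proof.
rewrite /pushforward; case: pickP => [a /eqP <-|//]; case: pickP => [b /eqP <-|//] _.
by rewrite !codom_f.
Qed.

Lemma pushforward_sym F :
  (forall a b, F a b = F b a) -> forall i j, pushforward F i j = pushforward F j i.
Proof.
move=> F_sym i j; rewrite /pushforward.
by case: [pick a | e a == i] => [a|]; case: [pick b | e b == j] => [b|].
Qed.

Lemma pushforward_le F (m : mgraph n) :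
  (forall a b, F a b <= m (e a) (e b)) -> forall i j, pushforward F i j <= m i j.
Proof.
move=> F_le i j; rewrite /pushforward.
by case: pickP => [a /eqP <-|_] //; case: pickP => [b /eqP <-|_].
Qed.

Lemma sum_codom (G : 'I_n -> nat) :
  (forall i, i \notin codom e -> G i = 0) -> \sum_i G i = \sum_a G (e a).
Proof.
move=> G0; rewrite (bigID (mem (codom e))) /= [X in _ + X]big1 ?addn0 //.
by rewrite -big_uniq ?big_image //; apply/injectiveP.
Qed.

Lemma deg_sum_induced (m : mgraph n) :
  (forall i j, 0 < m i j -> i \in codom e /\ j \in codom e) ->
  deg_sum (induced m) = deg_sum m.
Proof.
move=> m_codom; rewrite /deg_sum /mdeg [RHS]sum_codom => [|i i_out]; last first.
  by apply: big1 => j _; apply/eqP; rewrite -leqn0 leqNgt; apply: contra i_out => /m_codom [].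
apply: eq_bigr => a _; rewrite [RHS]sum_codom // => j j_out.
by apply/eqP; rewrite -leqn0 leqNgt; apply: contra j_out => /m_codom [].
Qed.

End Induced.

Section Symmetrization.
Variable p : nat.
Implicit Types F : mgraph p.

Lemma perm_two_transitive (a b a' b' : 'I_p) : a != b -> a' != b' ->
  exists t : {perm 'I_p}, t a = a' /\ t b = b'.
Proof.
move=> ab ab'; pose c := tperm a a' b.
have a'_c : a' != c by rewrite -(tpermL a a') (inj_eq perm_inj).
exists (tperm a a' * tperm c b')%g; rewrite !permM tpermL tpermD 1?eq_sym //.
by rewrite tpermL.
Qed.

Definition symmetrize F i j := \sum_(s : {perm 'I_p}) F (s i) (s j).

Lemma symmetrize_offdiag F a b a' b' : a != b -> a' != b' ->
  symmetrize F a b = symmetrize F a' b'.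
Proof.
move=> ab ab'; have [t [ta tb]] := perm_two_transitive ab ab'.
rewrite /symmetrize (reindex_inj (mulgI t)) /=; apply: eq_bigr => s _.
by rewrite !permM ta tb.
Qed.

Lemma symmetrize_diag F i : is_multigraph F -> symmetrize F i i = 0.
Proof. by move=> [_ diag]; apply: big1 => s _; rewrite diag. Qed.

Lemma sum_symmetrize F :
  \sum_i \sum_j symmetrize F i j = #|{perm 'I_p}| * deg_sum F.
Proof.
rewrite -sum_nat_const /symmetrize.
under eq_bigr => i _ do rewrite exchange_big /=.
rewrite exchange_big /=; apply: eq_bigr => s _.
rewrite /deg_sum /mdeg [RHS](reindex_inj (@perm_inj _ s)) /=; apply: eq_bigr => i _.
by rewrite [RHS](reindex_inj (@perm_inj _ s)).
Qed.

Lemma symmetrizeE F a b : is_multigraph F -> a != b ->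
  p * (p - 1) * symmetrize F a b = #|{perm 'I_p}| * deg_sum F.
Proof.
move=> F_mg ab; rewrite -sum_symmetrize -mulnA -[p in p * _]card_ord -sum_nat_const.
apply: eq_bigr => i _; rewrite (bigD1 i) //= symmetrize_diag // add0n.
rewrite (eq_bigr (fun _ => symmetrize F a b)) => [|j ji]; last first.
  by apply: symmetrize_offdiag; rewrite // eq_sym.
by rewrite sum_nat_const cardC1 card_ord subn1.
Qed.

Lemma sum_perm_weight F (m : mgraph p) : is_multigraph F -> (forall i, m i i = 0) -> 1 < p ->
  p * (p - 1) * \sum_(s : {perm 'I_p}) \sum_i \sum_j F (s i) (s j) * m i j =
  #|{perm 'I_p}| * (deg_sum F * deg_sum m).
Proof.
move=> F_mg m_diag p2.
pose a : 'I_p := Ordinal (ltnW p2); pose b : 'I_p := Ordinal p2.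
have ab : a != b by rewrite -val_eqE.
have weight i j :
    p * (p - 1) * symmetrize F i j * m i j = #|{perm 'I_p}| * deg_sum F * m i j.
  case: (eqVneq i j) => [->|ij]; first by rewrite m_diag !muln0.
  by rewrite (symmetrize_offdiag F ij ab) (symmetrizeE F_mg ab).
transitivity (\sum_i \sum_j p * (p - 1) * symmetrize F i j * m i j).
  rewrite /symmetrize exchange_big big_distrr /=; apply: eq_bigr => i _.
  rewrite exchange_big big_distrr /=; apply: eq_bigr => j _.
  by rewrite -big_distrl mulnA.
under eq_bigr => i _ do under eq_bigr => j _ do rewrite weight.
rewrite mulnA; set c := _ * deg_sum F.
by rewrite /deg_sum big_distrr /=; apply: eq_bigr => i _; rewrite big_distrr.
Qed.

End Symmetrization.

Section Containment.
Variables (h : nat) (H : rel 'I_h).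

Lemma containsP n (m : mgraph n) :
  reflect (exists f : 'I_h -> 'I_n,
             injective f /\ forall u v, H u v -> 0 < m (f u) (f v))
          (contains m H).
Proof.
apply: (iffP existsP).
  move=> [f /andP [/injectiveP f_inj /forallP f_edge]]; exists f; split=> // u v.
  by move/forallP: (f_edge u) => /(_ v) /implyP.
move=> [f [f_inj f_edge]]; exists [ffun u => f u]; apply/andP; split.
  by apply/injectiveP => u v; rewrite !ffunE; apply: f_inj.
apply/forallP => u; apply/forallP => v; apply/implyP => Huv.
by rewrite !ffunE; apply: f_edge.
Qed.

Lemma contains_map n1 n2 (m1 : mgraph n1) (m2 : mgraph n2) (g : 'I_n1 -> 'I_n2) :
  injective g -> (forall i j, 0 < m1 i j -> 0 < m2 (g i) (g j)) ->
  contains m1 H -> contains m2 H.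
Proof.
move=> g_inj g_edge /containsP [f [f_inj f_edge]]; apply/containsP.
by exists (g \o f); split=> [|u v /f_edge /g_edge //]; apply: inj_comp.
Qed.

Lemma edges_le_ex n (m F : mgraph n) :
  (forall i j, F i j <= m i j) -> (forall i j, F i j = F j i) ->
  ~~ contains F H -> edges F <= ex m H.
Proof.
move=> Fm F_sym F_free; rewrite /ex.
set b := \max_(i < n) \max_(j < n) m i j.
have F_lt i j : F i j < b.+1.
  rewrite ltnS (leq_trans (Fm i j)) //.
  apply: leq_trans (leq_bigmax_cond (F := fun i => \max_(j < n) m i j) i isT).
  exact: (leq_bigmax_cond (F := fun j => m i j)).
pose Fb : {ffun 'I_n * 'I_n -> 'I_b.+1} := [ffun p => Ordinal (F_lt p.1 p.2)].
have FbE i j : Fb (i, j) = F i j :> nat by rewrite ffunE.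
rewrite (eq_edges (fun i j => esym (FbE i j))); apply: leq_bigmax_cond.
apply/andP; split.
  by apply/forallP => i; apply/forallP => j; rewrite !FbE Fm F_sym eqxx.
by apply: contra F_free; apply: contains_map (@id _) _ _ => // i j; rewrite FbE.
Qed.

Lemma ex_le_edges n (m : mgraph n) : ex m H <= edges m.
Proof.
apply/bigmax_leqP => F /andP [/forallP F_le _].
apply: leq_sum => i _; apply: leq_sum => j _.
by have /andP [] := forallP (F_le i) j.
Qed.

Lemma card_arc_set_le_ex n (m : mgraph n) S : is_multigraph m -> arc_set m S ->
  ~~ contains (restr m S) H -> #|S| <= 2 * ex m H.
Proof.
move=> mm /forall_inP S_arcs S_free.
have S_mg : is_multigraph (restr m S).
  by apply: restr_multigraph => // p /S_arcs /andP [].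
apply: leq_trans (card_le_deg_sum_restr (m := m) _) _ => [p /S_arcs /andP [] //|].
rewrite deg_sum_edges // leq_mul2l /=; apply: edges_le_ex S_free => //.
  exact: restr_le.
by case: S_mg.
Qed.

(* Every relabelling of [F] meets [m] in an [H]-free subgraph, and on average a
   relabelling of [F] covers each pair of distinct vertices with weight
   [deg_sum F / (p (p - 1))]. *)
Lemma averaging p (m F : mgraph p) : is_multigraph m -> is_simple F -> ~~ contains F H ->
  deg_sum F * deg_sum m <= p * (p - 1) * (2 * ex m H).
Proof.
move=> mm [F_mg F_le1] F_free; have [m_sym m_diag] := mm; have [F_sym _] := F_mg.
case: (ltnP p 2) => p2.
  rewrite [deg_sum m]big1 ?muln0 // => i _; apply: big1 => j _.
  by have -> : j = i by apply: ord_inj; move: (ltn_ord i) (ltn_ord j); lia.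
have relabel_le (s : {perm 'I_p}) : \sum_i \sum_j F (s i) (s j) * m i j <= 2 * ex m H.
  pose G : mgraph p := fun i j => F (s i) (s j) * m i j.
  have G_mg : is_multigraph G.
    by split=> [i j|i]; rewrite /G; [rewrite F_sym m_sym | rewrite m_diag muln0].
  change (deg_sum G <= 2 * ex m H); rewrite deg_sum_edges // leq_mul2l /=.
  apply: edges_le_ex.
  - move=> i j; rewrite /G; have := F_le1 (s i) (s j).
    by case: (F _ _) => [|[|]] // _; rewrite mul1n.
  - by case: G_mg.
  - apply: contra F_free; apply: contains_map (@perm_inj _ s) _ => i j.
    by rewrite /G muln_gt0 => /andP [].
have perm_gt0 : 0 < #|{perm 'I_p}| by apply/card_gt0P; exists 1%g.
rewrite -(leq_pmul2l perm_gt0) -(sum_perm_weight F_mg m_diag p2) mulnCA.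
rewrite leq_pmul2l ?muln_gt0 ?subn_gt0 ?p2 ?(ltnW p2) //.
by rewrite -sum_nat_const; apply: leq_sum => s _.
Qed.

End Containment.

Section Forbidden.
Variables (h : nat) (H : rel 'I_h).
Hypothesis H_graph : is_graph H.
Hypothesis H_not_matching : ~ is_matching H.
Hypothesis H_not_star : ~ is_star H.

Definition hdeg u := #|[pred v | H u v]|.

Lemma hdeg_gt0 u : 0 < hdeg u.
Proof. by have [_ [_ /(_ u) [v Huv]]] := H_graph; apply/card_gt0P; exists v. Qed.

Lemma exists_hdeg_gt1 : exists u, 1 < hdeg u.
Proof.
case: (boolP [exists u, 1 < hdeg u]) => [/existsP //|/existsPn small].
case: H_not_matching => u; apply/eqP.
by rewrite eqn_leq hdeg_gt0 andbT leqNgt small.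
Qed.

Lemma matching_Hfree n (F : mgraph n) :
  (forall i j j', 0 < F i j -> 0 < F i j' -> j = j') -> ~~ contains F H.
Proof.
move=> F_matching; apply/negP => /containsP [f [f_inj f_edge]].
have [u /card_gt1P [v [w [Huv Huw vw]]]] := exists_hdeg_gt1.
have /f_inj eq_vw := F_matching _ _ _ (f_edge u v Huv) (f_edge u w Huw).
by rewrite eq_vw eqxx in vw.
Qed.

Lemma star_Hfree n (F : mgraph n) x :
  (forall i j, 0 < F i j -> i = x \/ j = x) -> ~~ contains F H.
Proof.
move=> F_star; apply/negP => /containsP [f [f_inj f_edge]]; apply: H_not_star.
case: (pickP (fun u => f u == x)) => [c /eqP fc | f_miss].
  by exists c => u v /f_edge /F_star; rewrite -fc => -[] /f_inj; auto.
have [u /ltnW /card_gt0P [v Huv]] := exists_hdeg_gt1.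
by have [] := F_star _ _ (f_edge u v Huv) => /eqP; rewrite f_miss.
Qed.

Lemma ex_witness n (m : mgraph n) :
  exists F : mgraph n, [/\ forall i j, F i j <= m i j, forall i j, F i j = F j i,
                           ~~ contains F H & edges F = ex m H].
Proof.
rewrite /ex; set b := \max_(i < n) _.
pose admissible (F : {ffun 'I_n * 'I_n -> 'I_b.+1}) :=
  [forall i, forall j, ((F (i, j) : nat) <= m i j) && ((F (i, j) : nat) == F (j, i))]
  && ~~ contains (fun i j => (F (i, j) : nat)) H.
have adm_nonempty : 0 < #|admissible|.
  apply/card_gt0P; exists [ffun => ord0]; apply/andP; split.
    by apply/forallP => i; apply/forallP => j; rewrite !ffunE.
  by apply: matching_Hfree => i j j'; rewrite ffunE.
have [F F_adm ->] := eq_bigmax_cond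
  (fun F : {ffun 'I_n * 'I_n -> 'I_b.+1} => edges (fun i j => (F (i, j) : nat)))
  adm_nonempty.
move: F_adm => /andP [/forallP F_le F_free]; exists (fun i j => F (i, j) : nat); split=> // i j.
  by have /andP [] := forallP (F_le i) j.
by have /andP [_ /eqP] := forallP (F_le i) j.
Qed.

Lemma mdeg_le_ex n (m : mgraph n) x : is_multigraph m -> mdeg m x <= ex m H.
Proof.
move=> mm; have [sym diag] := mm.
pose S := [set p : 'I_n * 'I_n | (p.1 == x) || (p.2 == x)].
have S_mg : is_multigraph (restr m S).
  by apply: restr_multigraph => // p; rewrite !inE orbC.
have deg_sum_star : deg_sum (restr m S) = 2 * mdeg m x.
  rewrite /deg_sum /mdeg /restr (bigD1 x) //= mul2n -addnn; congr (_ + _).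
    by apply: eq_bigr => j _; rewrite inE eqxx.
  rewrite [RHS](bigD1 x) //= diag add0n; apply: eq_bigr => i /negbTE i_x.
  rewrite (bigD1 x) //= inE eqxx orbT sym big1 ?addn0 // => j /negbTE j_x.
  by rewrite inE i_x j_x.
have -> : mdeg m x = edges (restr m S).
  by apply/eqP; rewrite -(eqn_pmul2l (isT : 0 < 2)) -deg_sum_star deg_sum_edges.
apply: edges_le_ex; [exact: restr_le | by case: S_mg |].
apply: (star_Hfree (x := x)) => i j; rewrite /restr inE /=.
by case: ifP => // /orP [] /eqP ->; auto.
Qed.

Lemma exists_small_cover n (m : mgraph n) : is_multigraph m ->
  exists2 X : {set 'I_n}, #|X| <= 2 * ex m H
    & forall i j, 0 < m i j -> (i \in X) || (j \in X).
Proof.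
move=> mm.
have M0 : matching_set m set0.
  by rewrite /matching_set imset0 !cards0 eqxx andbT; apply/forall_inP => p; rewrite inE.
case: (arg_maxnP (fun M : {set 'I_n * 'I_n} => #|M|) M0) => M M_match M_max.
have /andP [M_arcs /imset_injP fst_inj] := M_match.
exists (fst @: M).
  rewrite (card_in_imset fst_inj) card_arc_set_le_ex //.
  apply: matching_Hfree => i j j'; rewrite /restr.
  case: ifP => // ijM _; case: ifP => // ij'M _.
  by case: (fst_inj _ _ ijM ij'M erefl).
move=> i j m_ij; apply/negPn/negP; rewrite negb_or => /andP [iX jX].
have [M' M'_match M_lt] := matching_set_augment mm M_match m_ij iX jX.
by have := leq_ltn_trans (M_max _ M'_match) M_lt; rewrite ltnn.
Qed.

Lemma edges_le_cover_ex n (m : mgraph n) (X : {set 'I_n}) : is_multigraph m ->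
  (forall i j, 0 < m i j -> (i \in X) || (j \in X)) -> edges m <= #|X| * ex m H.
Proof.
move=> mm X_cover; apply: leq_trans (edges_le_cover mm X_cover) _.
by rewrite -sum_nat_const; apply: leq_sum => x _; apply: mdeg_le_ex.
Qed.

Lemma edges_le_ex_sq n (m : mgraph n) : is_multigraph m ->
  edges m <= 2 * ex m H * ex m H.
Proof.
move=> mm; have [X X_small X_cover] := exists_small_cover mm.
by apply: leq_trans (edges_le_cover_ex mm X_cover) _; rewrite leq_mul2r X_small orbT.
Qed.

Lemma edges_le_support_ex n (m : mgraph n) : is_multigraph m ->
  edges m <= #|support m| * ex m H.
Proof.
move=> mm; apply: edges_le_cover_ex => // i j m_ij.
by rewrite inE; apply/orP; left; apply/existsP; exists j.
Qed.

Definition star_forest :=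
  [forall u, forall v, H u v ==> (hdeg u <= 1) || (hdeg v <= 1)].

Lemma hdeg_le_out_deg n (S : {set 'I_n * 'I_n}) (f : 'I_h -> 'I_n) u :
  injective f -> (forall v, H u v -> (f u, f v) \in S) -> hdeg u <= out_deg S (f u).
Proof.
move=> f_inj f_edge; rewrite /hdeg -(card_imset _ f_inj); apply: subset_leq_card.
by apply/subsetP => _ /imsetP [v Huv ->]; rewrite inE f_edge.
Qed.

Lemma support_card_le_ex n (m : mgraph n) : is_multigraph m -> ~~ star_forest ->
  #|support m| <= 2 * ex m H.
Proof.
move=> mm /forallPn [u /forallPn [v]].
rewrite negb_imply negb_or -!ltnNge => /and3P [Huv du dv].
have [sym _] := mm.
have E0 : edge_cover m [set p | 0 < m p.1 p.2].
  apply/andP; split; first by apply/forall_inP => p; rewrite !inE sym => ->.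
  apply/subsetP => i; rewrite inE => /existsP [j m_ij].
  by apply/imsetP; exists (i, j); rewrite ?inE.
case: (arg_minnP (fun E : {set 'I_n * 'I_n} => #|E|) E0) => E E_cov E_min.
have /andP [E_arcs E_supp] := E_cov.
apply: leq_trans (subset_leq_card E_supp) _; apply: leq_trans (leq_imset_card _ _) _.
apply: card_arc_set_le_ex => //; apply/negP => /containsP [f [f_inj f_edge]].
have in_E a b : H a b -> (f a, f b) \in E by move/f_edge; rewrite /restr; case: ifP.
have big a : 1 < hdeg a -> 1 < out_deg E (f a).
  by move=> da; apply: leq_trans da (hdeg_le_out_deg f_inj (in_E a)).
case/orP: (min_edge_cover_leaf mm E_cov E_min (in_E _ _ Huv)) => small.
  by have := leq_ltn_trans small (big u du); rewrite ltnn.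
by have := leq_ltn_trans small (big v dv); rewrite ltnn.
Qed.

Lemma H_sym u v : H u v -> H v u.
Proof. by case: H_graph => H_symm _; rewrite H_symm. Qed.

Definition nb u := odflt u [pick v | H u v].

Lemma nbP u : H u (nb u).
Proof.
rewrite /nb; case: pickP => [v //|no_nb] /=.
by have [_ [_ /(_ u) [v]]] := H_graph; rewrite no_nb.
Qed.

Lemma hdeg1_nb u v : hdeg u <= 1 -> H u v -> nb u = v.
Proof. by move=> /card_le1_eqP all_eq Huv; apply: all_eq; rewrite // inE nbP. Qed.

(* In a star forest every edge joins a center to a leaf; a [K_2] component is centered
   at its smaller endpoint. *)
Definition center u := (1 < hdeg u) || (hdeg (nb u) == 1) && (u < nb u).

Lemma leaf_hdeg u : ~~ center u -> hdeg u = 1.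
Proof.
by rewrite negb_or => /andP [small _]; apply/eqP; rewrite eqn_leq hdeg_gt0 leqNgt small.
Qed.

Lemma center_nb l : ~~ center l -> center (nb l).
Proof.
move=> l_leaf; have l1 := leaf_hdeg l_leaf.
rewrite /center; case: (ltnP 1 (hdeg (nb l))) => //= nb_small.
have -> : nb (nb l) = l by apply: hdeg1_nb nb_small (H_sym (nbP l)).
rewrite l1 eqxx /=; move: l_leaf; rewrite /center l1 ltnn /= negb_and.
have -> : hdeg (nb l) == 1 by rewrite eqn_leq nb_small hdeg_gt0.
have : l != nb l by apply/eqP => e; have := nbP l; rewrite -e; case: H_graph => _ [->].
by rewrite neq_ltn => /orP [->|].
Qed.

Lemma center_edge u v : star_forest -> H u v -> center u = ~~ center v.
Proof.
move=> SF; wlog u1 : u v / hdeg u <= 1 => [wlog_u1 Huv|Huv].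
  have /orP [u1|v1] := implyP (forallP (forallP SF u) v) Huv; first exact: wlog_u1.
  by rewrite (wlog_u1 v u v1 (H_sym Huv)) negbK.
case: (boolP (center u)) => [u_center|u_leaf]; last first.
  by rewrite -(hdeg1_nb u1 Huv) (center_nb u_leaf).
have nb_u : nb u = v := hdeg1_nb u1 Huv.
move: u_center; rewrite /center ltnNge u1 nb_u /= => /andP [/eqP v1 uv].
by rewrite v1 ltnn (hdeg1_nb (eq_leq v1) (H_sym Huv)) ltnNge (ltnW uv) andbF.
Qed.

(* Centers go to distinct vertices of [B]; then each leaf goes to an unused neighbour of
   the image of its center. *)
Lemma center_leaf_reps n (N : 'I_n -> {set 'I_n}) (B : {set 'I_n}) :
  h <= #|B| -> (forall x, x \in B -> 2 * h <= #|N x|) ->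
  exists g : 'I_h -> 'I_n, injective g /\ forall l, ~~ center l -> g l \in N (g (nb l)).
Proof.
move=> hB N_big; have [u0 _] := exists_hdeg_gt1.
have [x0 _] : exists x0, x0 \in B by apply/card_gt0P; apply: leq_trans hB; case: h u0 => [[]|].
pose Cs := [seq u <- enum 'I_h | center u].
pose Ls := [seq u <- enum 'I_h | ~~ center u].
have in_Cs u : (u \in Cs) = center u by rewrite mem_filter mem_enum andbT.
have in_Ls u : (u \in Ls) = ~~ center u by rewrite mem_filter mem_enum andbT.
have size_CL : size Cs + size Ls = h by rewrite !size_filter count_predC size_enum_ord.
have filter_uniq (a : pred 'I_h) : uniq [seq u <- enum 'I_h | a u].
  by rewrite filter_uniq ?enum_uniq.
have [|g1 [g1_inj g1_B _]] := distinct_reps x0 (A := fun=> B) (S := set0) (filter_uniq center).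
  by move=> _ _; rewrite cards0 add0n (leq_trans _ hB) // -[X in _ <= X]size_CL leq_addr.
have [|g2 [g2_inj g2_N g2_new]] := distinct_reps x0
  (A := fun l => N (g1 (nb l))) (S := [set g1 u | u in Cs]) (filter_uniq (predC center)).
  move=> l; rewrite in_Ls => /center_nb c_nb; rewrite -/Ls.
  apply: leq_trans (N_big _ (g1_B _ _)); last by rewrite in_Cs.
  have g1_Cs : #|[set g1 u | u in Cs]| <= size Cs.
    exact: leq_trans (leq_imset_card _ _) (card_size _).
  by apply: leq_trans (leq_add g1_Cs (leqnn _)) _; rewrite size_CL mul2n -addnn leq_addr.
pose g u := if center u then g1 u else g2 u.
have leaf_new l c : ~~ center l -> center c -> g l != g c.
  move=> l_leaf c_center; rewrite /g (negbTE l_leaf) c_center.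
  apply: contraNneq (g2_new l _) => [->|]; last by rewrite in_Ls.
  by apply/imsetP; exists c; rewrite ?in_Cs.
exists g; split=> [u v|l l_leaf]; last first.
  by rewrite /g (negbTE l_leaf) center_nb //; apply: g2_N; rewrite in_Ls.
case: (boolP (center u)) => cu; case: (boolP (center v)) => cv.
- by rewrite /g cu cv; apply: g1_inj; rewrite in_Cs.
- by move/eqP; rewrite eq_sym (negbTE (leaf_new v u cv cu)).
- by move/eqP; rewrite (negbTE (leaf_new u v cu cv)).
- by rewrite /g (negbTE cu) (negbTE cv); apply: g2_inj; rewrite in_Ls.
Qed.

Lemma star_forest_embed n (F : mgraph n) : star_forest -> (forall i j, F i j = F j i) ->
  h <= #|[set x | 2 * h <= #|[set j | 0 < F x j]|]| -> contains F H.
Proof.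
move=> SF F_sym hB.
have [|g [g_inj g_leaf]] := center_leaf_reps (N := fun x => [set j | 0 < F x j]) hB.
  by move=> x; rewrite inE.
apply/containsP; exists g; split=> // u v Huv.
case: (boolP (center u)) => [cu|u_leaf]; last first.
  by move: (g_leaf u u_leaf); rewrite (hdeg1_nb (eq_leq (leaf_hdeg u_leaf)) Huv) inE F_sym.
have v_leaf : ~~ center v by rewrite -(center_edge SF Huv).
by move: (g_leaf v v_leaf); rewrite (hdeg1_nb (eq_leq (leaf_hdeg v_leaf)) (H_sym Huv)) inE.
Qed.

Lemma ex_Kn_star_forest n : star_forest -> 2 * ex (Kn n) H <= 3 * h * n.
Proof.
move=> SF; have [F [F_Kn F_sym F_free <-]] := ex_witness (Kn n).
have [F_mg F_le1] := sub_Kn_simple F_Kn F_sym.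
set B := [set x | 2 * h <= #|[set j | 0 < F x j]|].
have B_small : #|B| < h by rewrite ltnNge; apply: contra F_free; apply: star_forest_embed.
rewrite -deg_sum_edges //.
apply: (@leq_trans (\sum_(i < n) ((if i \in B then n else 0) + 2 * h))).
  apply: leq_sum => i _; apply: leq_trans (mdeg_simple (F_le1 i)) _.
  case: ifP => iB; first by rewrite (leq_trans (max_card _)) ?card_ord ?leq_addr.
  by rewrite add0n ltnW // ltnNge; move: iB; rewrite inE => ->.
rewrite big_split /= -big_mkcond /= !sum_nat_const card_ord.
have : #|B| * n <= h * n by rewrite leq_mul2r ltnW ?orbT.
nia.
Qed.

Lemma ex_induced_le p n (e : 'I_p -> 'I_n) (m : mgraph n) : injective e ->
  is_multigraph m -> ex (induced e m) H <= ex m H.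
Proof.
move=> e_inj [m_sym m_diag]; have [F' [F'_le F'_sym F'_free <-]] := ex_witness (induced e m).
have F'_mg : is_multigraph F'.
  by split=> // a; apply/eqP; rewrite -leqn0 (leq_trans (F'_le a a)) // /induced m_diag.
set F := pushforward e F'.
have F_le : forall i j, F i j <= m i j := pushforward_le (e := e) (m := m) F'_le.
have F_mg : is_multigraph F.
  split; first exact: pushforward_sym.
  by move=> i; apply/eqP; rewrite -leqn0 (leq_trans (F_le i i)) ?m_diag.
have -> : edges F' = edges F.
  apply/eqP; rewrite -(eqn_pmul2l (isT : 0 < 2)) -!deg_sum_edges //.
  rewrite -(deg_sum_induced e_inj (@pushforward_codom _ _ e F')).
  by apply/eqP; apply: eq_bigr => a _; apply: eq_bigr => b _; rewrite /induced pushforwardE.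
apply: edges_le_ex F_le (proj1 F_mg) _; apply: contra F'_free => /containsP [f [f_inj f_edge]].
have f_codom u : f u \in codom e.
  by have [_ [_ /(_ u) [v /f_edge /pushforward_codom []]]] := H_graph.
apply/containsP; exists (fun u => iinv (f_codom u)); split.
  by move=> u v /(congr1 e); rewrite !f_iinv; apply: f_inj.
by move=> u v /f_edge; rewrite -(pushforwardE e_inj) !f_iinv.
Qed.

Lemma ex_Kn_support_edges n (m : mgraph n) : is_multigraph m ->
  2 * ex (Kn #|support m|) H * edges m <= #|support m| * (#|support m| - 1) * ex m H.
Proof.
move=> mm; have [m_sym _] := mm.
pose e : 'I_#|support m| -> 'I_n := enum_val.
have e_inj : injective e := @enum_val_inj _ _.
have in_codom i j : 0 < m i j -> i \in codom e.
  move=> m_ij; have iV : i \in support m by rewrite inE; apply/existsP; exists j.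
  by apply/codomP; exists (enum_rank_in iV i); rewrite /e enum_rankK_in.
have m'_mg : is_multigraph (induced e m).
  by case: mm => sym diag; split=> [a b|a]; rewrite /induced ?diag // sym.
have [F [F_Kn F_sym F_free F_edges]] := ex_witness (Kn #|support m|).
have F_simple := sub_Kn_simple F_Kn F_sym.
have := averaging m'_mg F_simple F_free.
rewrite (deg_sum_induced e_inj) => [|i j m_ij]; last first.
  by rewrite (in_codom i j) // (in_codom j i) // m_sym.
rewrite !deg_sum_edges //; last by case: F_simple.
rewrite F_edges; move: (#|support m| * _) => C avg.
have := leq_mul (leqnn C) (ex_induced_le e_inj mm); lia.
Qed.

End Forbidden.

Lemma INR_muln a b : INR (a * b) = (INR a * INR b)%R.
Proof. by rewrite -multE mult_INR. Qed.

Section RealBounds.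
Local Open Scope R_scope.

Lemma Rpower_gt0 x y : 0 < Rpower x y.
Proof. exact: exp_pos. Qed.

Lemma Rpower_sqr x : 0 < x -> Rpower x 2 = x * x.
Proof.
by move=> x_gt0; rewrite [2](_ : _ = INR 2) ?Rpower_pow //= ?Rmult_1_r //; ring.
Qed.

Lemma Rpower_Rinv x y : 0 < x -> Rpower (/ x) y = Rpower x (- y).
Proof. by move=> x_gt0; rewrite /Rpower ln_Rinv //; congr exp; ring. Qed.

Lemma exists_nat_floor x : 0 <= x -> exists n : nat, INR n <= x < INR n + 1.
Proof.
move=> x_ge0; have [lb ub] := base_Int_part x.
have Int_ge0 : (0 <= Int_part x)%Z.
  have : (-1 < Int_part x)%Z by apply: lt_IZR; lra.
  lia.
by exists (Z.to_nat (Int_part x)); rewrite INR_IZR_INZ Znat.Z2Nat.id //; lra.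
Qed.

Lemma exists_nat_ge r : exists K : nat, r <= INR K.
Proof.
have [n [_ n_gt]] := exists_nat_floor (Rmax_r r 0).
by exists n.+1; rewrite S_INR; have := Rmax_l r 0; lra.
Qed.

Lemma exponent_le (f : nat -> R) (c A beta gamma : R) (N : nat) : 0 < c ->
  (forall n : nat, (N <= n)%nat -> c * Rpower (INR n) beta <= f n) ->
  (forall n : nat, (1 <= n)%nat -> f n <= A * Rpower (INR n) gamma) -> beta <= gamma.
Proof.
move=> c_gt0 f_ge f_le; apply: Rnot_lt_le => gamma_lt.
set T := Rmax (A / c) 1.
have [K K_ge] := exists_nat_ge (Rpower T (/ (beta - gamma))).
set n := maxn (maxn N 1) K.+1.
have [nN n1 nK] : [/\ (N <= n)%nat, (1 <= n)%nat & (K < n)%nat].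
  by split; rewrite !leq_max leqnn ?orbT.
have K_lt_n : INR K < INR n by apply/lt_INR/ltP.
have T_lt : T < Rpower (INR n) (beta - gamma).
  have -> : T = Rpower (Rpower T (/ (beta - gamma))) (beta - gamma).
    by rewrite Rpower_mult Rinv_l ?Rpower_1 //; rewrite /T; [have := Rmax_r (A / c) 1 | ]; lra.
  apply: Rlt_Rpower_l; first lra.
  by split; [exact: Rpower_gt0 | lra].
have split_beta : Rpower (INR n) beta = Rpower (INR n) gamma * Rpower (INR n) (beta - gamma).
  by rewrite -Rpower_plus; congr Rpower; ring.
have A_le : A <= c * T.
  have -> : A = c * (A / c) by field; lra.
  by apply: Rmult_le_compat_l; [lra | exact: Rmax_l].
have P_gt0 := Rpower_gt0 (INR n) gamma.
have : A * Rpower (INR n) gamma <= c * T * Rpower (INR n) gamma.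
  by apply: Rmult_le_compat_r; lra.
have : c * T * Rpower (INR n) gamma < c * Rpower (INR n) gamma * Rpower (INR n) (beta - gamma).
  by rewrite Rmult_assoc (Rmult_comm T) -Rmult_assoc; apply: Rmult_lt_compat_l => //; nra.
have := f_ge n nN; have := f_le n n1; rewrite split_beta; lra.
Qed.

Lemma averaging_bound (c beta p k e : R) : 0 < c -> beta <= 2 -> 0 < p -> p <= 2 * k ->
  2 * c * Rpower p beta * e <= p * p * k ->
  e <= Rpower 2 (2 - beta) / (2 * c) * Rpower k (3 - beta).
Proof.
move=> c_gt0 beta_le2 p_gt0 p_le avg.
have k_gt0 : 0 < k by lra.
have pp : p * p = Rpower p (2 - beta) * Rpower p beta.
  by rewrite -Rpower_plus -Rpower_sqr //; congr Rpower; ring.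
have e_le : 2 * c * e <= Rpower p (2 - beta) * k.
  apply: (Rmult_le_reg_r (Rpower p beta)); first exact: Rpower_gt0.
  by move: avg; rewrite pp; lra.
have p_pow : Rpower p (2 - beta) <= Rpower 2 (2 - beta) * Rpower k (2 - beta).
  by rewrite Rpower_mult_distr; [apply: Rle_Rpower_l; lra | lra | lra].
have k_pow : Rpower k (2 - beta) * k = Rpower k (3 - beta).
  by rewrite -{2}(Rpower_1 k) // -Rpower_plus; congr Rpower; ring.
apply: (Rmult_le_reg_l (2 * c)); first lra.
have -> : 2 * c * (Rpower 2 (2 - beta) / (2 * c) * Rpower k (3 - beta)) =
          Rpower 2 (2 - beta) * (Rpower k (2 - beta) * k) by rewrite k_pow; field; lra.
apply: Rle_trans e_le _; rewrite -Rmult_assoc; apply: Rmult_le_compat_r; lra.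
Qed.

End RealBounds.

Section Asymptotics.
Local Open Scope R_scope.

Lemma Kn_edges_ge_sq (n : nat) (x : R) : (2 <= n)%nat -> 0 <= x < INR n + 1 ->
  x * x / 16 <= INR (edges (Kn n)).
Proof.
move=> n2 [x_ge0 x_lt]; have n_ge2 : 2 <= INR n by have := le_INR _ _ (elimT leP n2).
have -> : INR (edges (Kn n)) = INR n * (INR n - 1) / 2.
  have := f_equal INR (Kn_edges n); rewrite !INR_muln minus_INR /=; first lra.
  exact/leP/ltnW.
nra.
Qed.

Lemma exists_Kn_near (f : nat -> nat) (alpha C x : R) (N : nat) : 0 < alpha ->
  (forall n : nat, (N <= n)%nat -> INR (f n) <= C * Rpower (INR n) alpha) ->
  INR (maxn N 2) + 1 <= x ->
  exists n : nat, INR (f n) <= Rmax C 1 * Rpower x alpha /\ x * x / 16 <= INR (edges (Kn n)).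
Proof.
move=> alpha_gt0 f_le x_big.
have x_ge0 : 0 <= x by have := pos_INR (maxn N 2); lra.
have [n [n_le n_gt]] := exists_nat_floor x_ge0.
have n_big : (maxn N 2 < n)%nat by apply/ltP/INR_lt; lra.
have n2 : (2 <= n)%nat by lia.
have n_ge2 : 2 <= INR n by have := le_INR _ _ (elimT leP n2).
exists n; split; last by apply: Kn_edges_ge_sq => //; lra.
apply: Rle_trans (f_le n (ltac:(lia) : (N <= n)%nat)) _.
have n_x : Rpower (INR n) alpha <= Rpower x alpha by apply: Rle_Rpower_l; lra.
have := Rpower_gt0 (INR n) alpha; have := Rmax_l C 1; have := Rmax_r C 1; nra.
Qed.

Lemma exists_large_Kn (f : nat -> nat) (alpha C : R) (N : nat) : 0 < alpha ->
  (forall n : nat, (N <= n)%nat -> INR (f n) <= C * Rpower (INR n) alpha) ->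
  exists c, 0 < c /\ exists K : nat, forall k : nat, (K <= k)%nat ->
    exists n : nat, (f n < k)%nat /\ c * Rpower (INR k) (2 / alpha) <= INR (edges (Kn n)).
Proof.
move=> alpha_gt0 f_le; pose C' := Rmax C 1; have C'_ge1 : 1 <= C' := Rmax_r C 1.
pose M := INR (maxn N 2) + 1.
have M_gt0 : 0 < M by have := pos_INR (maxn N 2); rewrite /M; lra.
exists (Rpower (2 * C') (- (2 / alpha)) / 16).
split; first by have := Rpower_gt0 (2 * C') (- (2 / alpha)); lra.
have [K K_ge] := exists_nat_ge (2 * C' * Rpower M alpha).
exists (maxn K 1) => k; rewrite geq_max => /andP [kK k1].
have k_big : 2 * C' * Rpower M alpha <= INR k.
  exact: Rle_trans K_ge (le_INR _ _ (elimT leP kK)).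
have k_gt0 : 0 < INR k by apply/lt_0_INR/ltP.
pose y := INR k / (2 * C'); have y_gt0 : 0 < y by apply: Rdiv_lt_0_compat; lra.
pose x := Rpower y (/ alpha).
have x_alpha : Rpower x alpha = y by rewrite /x Rpower_mult Rinv_l ?Rpower_1 //; lra.
have M_le_x : M <= x.
  have -> : M = Rpower (Rpower M alpha) (/ alpha).
    by rewrite Rpower_mult Rinv_r ?Rpower_1 //; lra.
  apply: Rle_Rpower_l; first exact/Rlt_le/Rinv_0_lt_compat.
  split; first exact: Rpower_gt0.
  apply: (Rmult_le_reg_l (2 * C')); first lra.
  by have -> : 2 * C' * y = INR k by rewrite /y; field; lra.
have [n [fn_le edges_ge]] := exists_Kn_near alpha_gt0 f_le M_le_x.
exists n; split.
  apply/ltP/INR_lt; rewrite -/C' x_alpha in fn_le.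
  have : C' * y = INR k / 2 by rewrite /y; field; lra.
  lra.
have x_sq : Rpower (2 * C') (- (2 / alpha)) * Rpower (INR k) (2 / alpha) = x * x.
  rewrite -Rpower_sqr /x ?Rpower_mult; last exact: Rpower_gt0.
  rewrite -Rpower_Rinv; last lra.
  rewrite Rmult_comm Rpower_mult_distr; [|lra | apply: Rinv_0_lt_compat; lra].
  by congr Rpower; field; lra.
by rewrite /Rdiv Rmult_assoc (Rmult_comm (/ 16)) -Rmult_assoc x_sq.
Qed.

End Asymptotics.

Section ExKnGrowth.
Variables (h : nat) (H : rel 'I_h).
Hypothesis H_graph : is_graph H.
Hypothesis H_not_matching : ~ is_matching H.
Local Open Scope R_scope.

Lemma ex_Kn_le_pow2 (n : nat) : (1 <= n)%nat -> INR (ex (Kn n) H) <= 1 * Rpower (INR n) 2.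
Proof.
move=> n1; rewrite Rmult_1_l Rpower_sqr; last exact/lt_0_INR/ltP.
rewrite -INR_muln; apply/le_INR/leP; apply: leq_trans (ex_le_edges _ _) _.
rewrite -(leq_pmul2l (isT : (0 < 2)%nat)) Kn_edges (leq_trans _ (leq_pmull _ _)) //.
by rewrite leq_mul2l leq_subr orbT.
Qed.

Lemma ex_Kn_le_pow1 : star_forest H -> forall n : nat, (1 <= n)%nat ->
  INR (ex (Kn n) H) <= 3 * INR h / 2 * Rpower (INR n) 1.
Proof.
move=> SF n n1; rewrite Rpower_1; last exact/lt_0_INR/ltP.
have := le_INR _ _ (elimT leP (ex_Kn_star_forest H_graph H_not_matching n SF)).
rewrite !INR_muln /=; lra.
Qed.

End ExKnGrowth.

Section EdgeBounds.
Variables (h : nat) (H : rel 'I_h).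
Hypothesis H_graph : is_graph H.
Hypothesis H_not_matching : ~ is_matching H.
Hypothesis H_not_star : ~ is_star H.
Variables (n : nat) (m : mgraph n) (k : nat) (beta : R).
Hypothesis m_mg : is_multigraph m.
Hypothesis ex_lt : (ex m H < k)%nat.
Local Open Scope R_scope.

Let k_ge1 : 1 <= INR k.
Proof. by apply/(le_INR 1)/leP; apply: leq_ltn_trans ex_lt. Qed.

Lemma edges_le_low_exponent : beta <= 1 -> INR (edges m) <= 2 * Rpower (INR k) (3 - beta).
Proof.
move=> beta_le1.
have e_le : (edges m <= 2 * k * k)%nat.
  apply: leq_trans (edges_le_ex_sq H_graph H_not_matching H_not_star m_mg) _.
  by rewrite leq_mul // ?leq_mul2l ltnW.
have k_sq : INR k * INR k <= Rpower (INR k) (3 - beta).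
  by rewrite -Rpower_sqr; [apply: Rle_Rpower; lra | lra].
have := le_INR _ _ (elimT leP e_le); rewrite !INR_muln /=; lra.
Qed.

Lemma edges_le_small_support (N : nat) : beta <= 2 -> (#|support m| <= N)%nat ->
  INR (edges m) <= INR N * Rpower (INR k) (3 - beta).
Proof.
move=> beta_le2 p_le.
have e_le : (edges m <= N * k)%nat.
  apply: leq_trans (edges_le_support_ex H_graph H_not_matching H_not_star m_mg) _.
  by rewrite leq_mul // ltnW.
have k_le : INR k <= Rpower (INR k) (3 - beta).
  by rewrite -{1}(Rpower_1 (INR k)); [apply: Rle_Rpower; lra | lra].
have := le_INR _ _ (elimT leP e_le); rewrite INR_muln.
have := pos_INR N; nra.
Qed.

Lemma edges_le_averaging (c : R) (N : nat) : 0 < c -> beta <= 2 -> ~~ star_forest H ->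
  (forall p : nat, (N <= p)%nat -> c * Rpower (INR p) beta <= INR (ex (Kn p) H)) ->
  (N < #|support m|)%nat ->
  INR (edges m) <= Rpower 2 (2 - beta) / (2 * c) * Rpower (INR k) (3 - beta).
Proof.
move=> c_gt0 beta_le2 not_SF ex_Kn_ge p_gt.
have p_le : (#|support m| <= 2 * k)%nat.
  apply: leq_trans (support_card_le_ex m_mg not_SF) _.
  by rewrite leq_mul2l ltnW.
have avg : (2 * ex (Kn #|support m|) H * edges m <= #|support m| * #|support m| * k)%nat.
  apply: leq_trans (ex_Kn_support_edges H_graph H_not_matching m_mg) _.
  by rewrite leq_mul ?leq_mul ?leq_subr // ltnW.
set p := #|support m| in p_gt p_le avg *.
apply: (averaging_bound c_gt0 beta_le2 (p := INR p)).
- by apply/lt_0_INR/ltP; apply: leq_ltn_trans p_gt.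
- by have := le_INR _ _ (elimT leP p_le); rewrite INR_muln.
- have := le_INR _ _ (elimT leP avg); rewrite !INR_muln /=.
  have := Rmult_le_compat_r _ _ _ (pos_INR (edges m)) (ex_Kn_ge p (ltnW p_gt)); lra.
Qed.

End EdgeBounds.

Theorem theorem3p23 (h : nat) (H : rel 'I_h) (alpha beta : R) :
  is_graph H -> ~ is_matching H -> ~ is_star H ->
  (0 < alpha)%R -> (0 < beta)%R ->
  (* (1) ex(K_n,H) = O(n^alpha)  ==>  E_H(k) = Omega(k^(2/alpha)) *)
  ((exists C : R, exists N : nat, forall n : nat, (N <= n)%N ->
       (INR (ex (Kn n) H) <= C * Rpower (INR n) alpha)%R) ->
   exists c : R, (0 < c)%R /\ exists K : nat, forall k : nat, (K <= k)%N ->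
     exists (n : nat) (m : mgraph n),
       is_simple m /\ (ex m H < k)%N /\
       (c * Rpower (INR k) (2 / alpha) <= INR (edges m))%R)
  /\
  (* (2) ex(K_n,H) = Omega(n^beta)  ==>  E*_H(k) = O(k^(3-beta)) *)
  ((exists c : R, (0 < c)%R /\ exists N : nat, forall n : nat, (N <= n)%N ->
       (c * Rpower (INR n) beta <= INR (ex (Kn n) H))%R) ->
   exists C : R, exists K : nat, forall k : nat, (K <= k)%N ->
     forall (n : nat) (m : mgraph n),
       is_multigraph m -> (ex m H < k)%N ->
       (INR (edges m) <= C * Rpower (INR k) (3 - beta))%R).
Proof.
move=> H_graph H_not_matching H_not_star alpha_gt0 beta_gt0; split.
  move=> [C [N ex_Kn_le]].
  have [c [c_gt0 [K Kn_big]]] := exists_large_Kn alpha_gt0 ex_Kn_le.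
  exists c; split=> //; exists K => k /Kn_big [n [ex_lt edges_ge]].
  by exists n, (Kn n); split; [exact: Kn_simple | split].
move=> [c [c_gt0 [N ex_Kn_ge]]].
have beta_le2 : (beta <= 2)%R := exponent_le c_gt0 ex_Kn_ge (ex_Kn_le_pow2 H).
pose D := (Rpower 2 (2 - beta) / (2 * c))%R.
have D_ge0 : (0 <= D)%R by apply/Rlt_le/Rdiv_lt_0_compat; [exact: Rpower_gt0 | lra].
exists (2 + INR N + D)%R, 0%N => k _ n m m_mg ex_lt.
have weaken T : (0 <= T <= 2 + INR N + D)%R ->
    (INR (edges m) <= T * Rpower (INR k) (3 - beta))%R ->
    (INR (edges m) <= (2 + INR N + D) * Rpower (INR k) (3 - beta))%R.
  move=> T_le /Rle_trans; apply; apply: Rmult_le_compat_r; [exact/Rlt_le/Rpower_gt0 | lra].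
have N_ge0 := pos_INR N.
have [beta_le1|beta_gt1] := Rle_lt_dec beta 1.
  apply: (weaken 2%R); first lra.
  exact: (edges_le_low_exponent H_graph H_not_matching H_not_star m_mg ex_lt).
have not_SF : ~~ star_forest H.
  apply/negP => SF.
  have := exponent_le c_gt0 ex_Kn_ge (ex_Kn_le_pow1 H_graph H_not_matching SF); lra.
have [p_le|p_gt] := leqP #|support m| N.
  apply: (weaken (INR N)); first lra.
  exact: (edges_le_small_support H_graph H_not_matching H_not_star m_mg ex_lt).
apply: (weaken D); first lra.
exact: (edges_le_averaging H_graph H_not_matching m_mg ex_lt c_gt0 beta_le2 not_SF
          ex_Kn_ge p_gt).
Qed.
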